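(* Let $\mathbf{x}$ be a feasible solution of $\textsc{Dir-MC-Rel}$ and let $\theta$ be chosen uniformly at random from $(0,1)$. Then for every edge $e\in E$, $\Pr[e\in C(\theta)]\le 2x_e$.
   Context: $G=(V,E)$ is a directed graph with non-negative edge weights $w_e$ and distinct terminals $s_1,\dots,s_k$, $k\ge2$. For $i\neq j$, $\mathcal{P}_{ij}$ is the set of directed paths from $s_i$ to $s_j$ in $G$. $\textsc{Dir-MC-Rel}$: minimize $\sum_e w_e x_e$ s.t. $\sum_{e\in p}x_e\ge1$ for all $p\in\mathcal{P}_{ij}$, $i\ne j$, and $x\ge0$. Given feasible $\mathbf{x}$, form $G^+$ by adding new vertices $t_1,\dots,t_k$ and new edges $(t_i,s_j)$ for all $i\neq j$, each with $x$-value $0$. For vertices $u,v$ of $G^+$, $d(u,v)$ is the length of a shortest directed path from $u$ to $v$ in $G^+$ with edge lengths $\mathbf{x}$ ($+\infty$ if none). $B(v,r)=\{u: d(v,u)\le r\}$. For a vertex set $A$, $\delta^+(A)$ is the set of edges of $G^+$ with tail in $A$ and head not in $A$. For $\theta\in(0,1)$, $C(\theta)=\bigcup_{i=1}^k\delta^+(B(t_i,\theta))$. *)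

(* real numbers, Riemann integral for the probability over uniform theta. *)
From Stdlib Require Import Reals List Classical ClassicalEpsilon.
Open Scope R_scope.

Fixpoint is_walk {W F : Type} (tl hd : F -> W) (a b : W) (p : list F) : Prop :=
  match p with
  | nil => a = b
  | e :: p' => tl e = a /\ is_walk tl hd (hd e) b p'
  end.

Definition is_path {W F : Type} (tl hd : F -> W) (a b : W) (p : list F) : Prop :=
  is_walk tl hd a b p /\ NoDup (a :: map hd p).

Definition plen {F : Type} (l : F -> R) (p : list F) : R :=
  fold_right (fun e acc => l e + acc) 0 p.

Definition is_dist {W F : Type} (tl hd : F -> W) (l : F -> R) (a b : W) (m : R) : Prop :=
  (exists p, is_path tl hd a b p /\ plen l p = m) /\
  (forall p, is_path tl hd a b p -> m <= plen l p).

(* u in B(a, r), i.e. d(a,u) <= r  (d = +infinity when no path exists) *)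
Definition in_ball {W F : Type} (tl hd : F -> W) (l : F -> R) (a : W) (r : R) (u : W) : Prop :=
  exists m, is_dist tl hd l a u m /\ m <= r.

Definition feasible {V E : Type} (tail head : E -> V) (k : nat) (s : nat -> V)
  (x : E -> R) : Prop :=
  (forall e, 0 <= x e) /\
  (forall i j, (i < k)%nat -> (j < k)%nat -> i <> j ->
     forall p, is_path tail head (s i) (s j) p -> 1 <= plen x p).

Definition term (k : nat) := { i : nat | (i < k)%nat }.

(* vertices of G+: V plus new vertices t_0..t_{k-1} *)
Definition Vplus (V : Type) (k : nat) := (V + term k)%type.

(* new edges (t_i, s_j), i <> j *)
Definition newedge (k : nat) :=
  { ij : nat * nat | (fst ij < k)%nat /\ (snd ij < k)%nat /\ fst ij <> snd ij }.

Definition Eplus (E : Type) (k : nat) := (E + newedge k)%type.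

Definition tailp {V E : Type} (tail : E -> V) (k : nat) (f : Eplus E k) : Vplus V k :=
  match f with
  | inl e => inl (tail e)
  | inr ij => inr (exist _ (fst (proj1_sig ij)) (proj1 (proj2_sig ij)))
  end.

Definition headp {V E : Type} (head : E -> V) (k : nat) (s : nat -> V)
  (f : Eplus E k) : Vplus V k :=
  match f with
  | inl e => inl (head e)
  | inr ij => inl (s (snd (proj1_sig ij)))
  end.

Definition xplus {E : Type} (k : nat) (x : E -> R) (f : Eplus E k) : R :=
  match f with
  | inl e => x e
  | inr _ => 0
  end.

Definition ballp {V E : Type} (tail head : E -> V) (k : nat) (s : nat -> V) (x : E -> R)
  (a : Vplus V k) (r : R) (u : Vplus V k) : Prop :=
  in_ball (tailp tail k) (headp head k s) (xplus k x) a r u.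

(* e in C(theta) = U_i delta^+(B(t_i, theta)), for an original edge e of G *)
Definition in_cut {V E : Type} (tail head : E -> V) (k : nat) (s : nat -> V) (x : E -> R)
  (theta : R) (e : E) : Prop :=
  exists (i : term k),
    ballp tail head k s x (inr i) theta (inl (tail e)) /\
    ~ ballp tail head k s x (inr i) theta (inl (head e)).

Definition cut_ind {V E : Type} (tail head : E -> V) (k : nat) (s : nat -> V) (x : E -> R)
  (e : E) (theta : R) : R :=
  if excluded_middle_informative (in_cut tail head k s x theta e) then 1 else 0.

(* For a vertex u, a shortest path from a new vertex t_i to u starts with a zero-length edge
   (t_i, s_j), which every t_i' with i' <> j can use as well; hence d(t_i, u) takes at most two
   values as i ranges over the terminals.  An edge e = (u, w) leaves B(t_i, theta) only if
   d(t_i, u) <= theta < d(t_i, w) <= d(t_i, u) + x_e, so the set of theta cutting e is covered by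
   two intervals of length x_e.  The indicator of this event is a step function whose breaks lie
   among the finitely many path lengths, hence Riemann integrable. *)

From Pilot Require Import Defs.
From Stdlib Require Import Reals List Classical ClassicalEpsilon Lra Lia ProofIrrelevance.
From Coquelicot Require Import Coquelicot.
Open Scope R_scope.

Lemma plen_app {F : Type} (l : F -> R) p q : plen l (p ++ q) = plen l p + plen l q.
Proof. induction p as [|f p IH]; simpl; [ring | rewrite IH; ring]. Qed.

Lemma plen_ge0 {F : Type} (l : F -> R) (l_ge0 : forall f, 0 <= l f) p : 0 <= plen l p.
Proof. induction p as [|f p IH]; simpl; [lra | specialize (l_ge0 f); lra]. Qed.

Lemma NoDup_cons_suffix {A : Type} (l1 l2 : list A) a :
  NoDup (l1 ++ l2) -> In a l1 -> NoDup (a :: l2).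
Proof.
  induction l1 as [|b l1 IH]; simpl; intros Hnd Ha; [contradiction|].
  inversion Hnd as [|? ? Hb Hnd']; subst. destruct Ha as [<-|Ha]; [|auto].
  constructor; [intro; apply Hb, in_or_app; auto | eapply NoDup_app_remove_l; eauto].
Qed.

Fixpoint lists_upto {A : Type} (L : list A) (n : nat) : list (list A) :=
  match n with
  | O => nil :: nil
  | S n' => nil :: flat_map (fun a => map (cons a) (lists_upto L n')) L
  end.

Lemma in_lists_upto {A : Type} (L : list A) n p :
  incl p L -> (length p <= n)%nat -> In p (lists_upto L n).
Proof.
  revert p; induction n as [|n IH]; intros [|a p] HL Hn; simpl in *; auto; [lia|].
  right. apply in_flat_map. exists a. split; [apply HL; left; auto|].
  apply in_map, IH; [intros b Hb; apply HL; right; auto | lia].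
Qed.

Lemma list_argmin {T : Type} (L : list T) (P : T -> Prop) (g : T -> R) :
  (exists c, In c L /\ P c) ->
  exists c, In c L /\ P c /\ forall c', In c' L -> P c' -> g c <= g c'.
Proof.
  induction L as [|c0 L IH]; intros [c [Hc HPc]]; [destruct Hc|].
  destruct (classic (exists c, In c L /\ P c)) as [HL|HL].
  - destruct (IH HL) as (m & Hm & HPm & Hmin).
    destruct (classic (P c0 /\ g c0 <= g m)) as [[HP0 Hle]|H0].
    + exists c0. split; [left; auto|]. split; [auto|].
      intros c' [<-|Hc'] HPc'; [lra | specialize (Hmin c' Hc' HPc'); lra].
    + exists m. split; [right; auto|]. split; [auto|].
      intros c' [<-|Hc'] HPc'; [|auto]. destruct (Rle_dec (g m) (g c0)); [auto|].
      exfalso; apply H0; split; [auto | lra].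
  - exists c0. destruct Hc as [<-|Hc]; [|exfalso; apply HL; eauto].
    split; [left; auto|]. split; [auto|].
    intros c' [<-|Hc'] HPc'; [lra | exfalso; apply HL; eauto].
Qed.

Section Walks.

Context {W F : Type} {tl hd : F -> W}.

Lemma is_walk_app a b c p q :
  is_walk tl hd a b p -> is_walk tl hd b c q -> is_walk tl hd a c (p ++ q).
Proof.
  revert a; induction p as [|f p IH]; simpl; intros a Hp Hq; [subst; auto|].
  destruct Hp; split; auto.
Qed.

Lemma is_walk_last_in a b p : is_walk tl hd a b p -> In b (a :: map hd p).
Proof.
  revert a; induction p as [|f p IH]; simpl; intros a Hp; [left; auto|].
  right. apply (IH _ (proj2 Hp)).
Qed.

Lemma is_walk_split a b p v :
  is_walk tl hd a b p -> In v (a :: map hd p) ->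
  exists p1 p2, p = p1 ++ p2 /\ is_walk tl hd a v p1 /\ is_walk tl hd v b p2.
Proof.
  revert a; induction p as [|f p IH]; intros a Hp [<-|Hv].
  - exists nil, nil. simpl in *. auto.
  - contradiction.
  - exists nil, (f :: p). simpl. auto.
  - destruct Hp as [Htl Hp].
    destruct (IH _ Hp Hv) as (p1 & p2 & -> & H1 & H2).
    exists (f :: p1), p2. simpl. auto.
Qed.

Lemma path_of_walk (l : F -> R) (l_ge0 : forall f, 0 <= l f) a b p :
  is_walk tl hd a b p -> exists q, is_path tl hd a b q /\ plen l q <= plen l p.
Proof.
  revert a; induction p as [|f p IH]; intros a Hp.
  - exists nil. split; [split; [auto | repeat constructor; simpl; tauto] | simpl; lra].
  - destruct Hp as [Htl Hp]. destruct (IH _ Hp) as (q & [Hq Hnd] & Hle).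
    assert (Hf := l_ge0 f). simpl.
    destruct (classic (In a (hd f :: map hd q))) as [Ha|Ha].
    + (* [f :: q] revisits [a]: cut out the loop *)
      destruct (is_walk_split _ _ _ _ Hq Ha) as (q1 & q2 & -> & Hq1 & Hq2).
      exists q2. split; [split; [auto|] |].
      * apply NoDup_cons_suffix with (hd f :: map hd q1); [|eapply is_walk_last_in; eauto].
        rewrite map_app in Hnd. exact Hnd.
      * rewrite plen_app in Hle. assert (Hq1' := plen_ge0 l l_ge0 q1). lra.
    + exists (f :: q). split; [split; [simpl; auto | constructor; auto] | simpl; lra].
Qed.

Lemma path_length_le (lW : list W) a b p :
  (forall f, In (hd f) lW) -> is_path tl hd a b p -> (length p <= length lW)%nat.
Proof.
  intros HW [_ Hnd]. inversion Hnd; subst. rewrite <- (length_map hd p).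
  apply NoDup_incl_length; [auto|]. intros w Hw.
  apply in_map_iff in Hw. destruct Hw as [f [<- _]]. apply HW.
Qed.

Lemma is_dist_unique (l : F -> R) a b m1 m2 :
  is_dist tl hd l a b m1 -> is_dist tl hd l a b m2 -> m1 = m2.
Proof.
  intros [[p1 [Hp1 <-]] H1] [[p2 [Hp2 <-]] H2].
  specialize (H1 p2 Hp2). specialize (H2 p1 Hp1). lra.
Qed.

Lemma is_dist_at_most_one (l : F -> R) a b : exists m0, forall m, is_dist tl hd l a b m -> m = m0.
Proof.
  destruct (classic (exists m, is_dist tl hd l a b m)) as [[m0 Hm0]|Hno].
  - exists m0. intros m Hm. eapply is_dist_unique; eauto.
  - exists 0. intros m Hm. exfalso; eauto.
Qed.

Variable (l : F -> R) (C : list (list F)).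
Hypothesis C_paths : forall a b p, is_path tl hd a b p -> In p C.

Lemma is_dist_exists a b p : is_path tl hd a b p -> exists m, is_dist tl hd l a b m.
Proof.
  intros Hp.
  destruct (list_argmin C (is_path tl hd a b) (plen l)) as (q & _ & Hq & Hmin); [eauto|].
  exists (plen l q). split; [eauto|]. intros p' Hp'. apply Hmin; eauto.
Qed.

Lemma is_dist_edge_le (l_ge0 : forall f, 0 <= l f) a f m :
  is_dist tl hd l a (tl f) m ->
  exists m', is_dist tl hd l a (hd f) m' /\ m' <= m + l f.
Proof.
  intros [[p [[Hp _] <-]] _].
  assert (Hw : is_walk tl hd a (hd f) (p ++ f :: nil)) by (apply is_walk_app with (tl f); simpl; auto).
  destruct (path_of_walk l l_ge0 _ _ _ Hw) as (q & Hq & Hle).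
  destruct (is_dist_exists _ _ _ Hq) as [m' Hm'].
  exists m'. split; [auto|]. pose proof (proj2 Hm' q Hq).
  rewrite plen_app in Hle. simpl in Hle. lra.
Qed.

Lemma in_ball_between_lengths a v y z :
  y <= z -> (forall p, In p C -> ~ (y <= plen l p <= z)) ->
  (in_ball tl hd l a y v <-> in_ball tl hd l a z v).
Proof.
  intros Hyz HC. split; intros [m [Hm Hle]]; exists m; split; auto; [lra|].
  destruct Hm as [[p [Hp <-]] _]. destruct (Rle_dec (plen l p) y) as [|Hgt]; auto.
  exfalso. apply (HC p); [eauto | lra].
Qed.

End Walks.

Lemma ex_RInt_piecewise_constant (L : list R) (f : R -> R) a b : a <= b ->
  (forall y z, a < y -> y <= z -> z < b -> (forall c, In c L -> ~ (y <= c <= z)) -> f y = f z) ->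
  ex_RInt f a b.
Proof.
  revert f a b; induction L as [|c L IH]; intros f a b Hab Hf.
  - destruct (Req_dec a b) as [<-|Hne]; [apply ex_RInt_point|].
    apply ex_RInt_ext with (fun _ => f ((a + b) / 2)); [|apply ex_RInt_const].
    rewrite Rmin_left, Rmax_right by lra. intros t Ht.
    destruct (Rle_dec t ((a + b) / 2)); [symmetry|]; apply Hf; try lra; intros c [].
  - assert (Hsub : forall a' b', a <= a' -> a' <= b' -> b' <= b -> ~ (a' < c < b') ->
                                 ex_RInt f a' b').
    { intros a' b' Ha' Hab' Hb' Hc. apply IH; [lra|]. intros y z Hy Hyz Hz HL.
      apply Hf; try lra. intros c' [<-|Hc']; [lra | auto]. }
    destruct (Rlt_dec a c); [destruct (Rlt_dec c b)|].
    + apply ex_RInt_Chasles with c; apply Hsub; lra.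
    + apply Hsub; lra.
    + apply Hsub; lra.
Qed.

Lemma RInt_le_superinterval (f : R -> R) u v m M :
  m <= u -> u <= v -> v <= M -> ex_RInt f m M -> (forall t, m < t < M -> 0 <= f t) ->
  RInt f u v <= RInt f m M.
Proof.
  intros Hmu Huv HvM Hint Hf.
  assert (Hmv : ex_RInt f m v) by (apply (@ex_RInt_Chasles_1 R_CompleteNormedModule f m v M); [lra | auto]).
  assert (Hmu' : ex_RInt f m u) by (apply (@ex_RInt_Chasles_1 R_CompleteNormedModule f m u v); [lra | auto]).
  assert (Huv' : ex_RInt f u v) by (apply (@ex_RInt_Chasles_2 R_CompleteNormedModule f m u v); [lra | auto]).
  assert (HvM' : ex_RInt f v M) by (apply (@ex_RInt_Chasles_2 R_CompleteNormedModule f m v M); [lra | auto]).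
  rewrite <- (RInt_Chasles f m v M), <- (RInt_Chasles f m u v) by auto.
  assert (0 <= RInt f m u) by (apply RInt_ge_0; auto; intros; apply Hf; lra).
  assert (0 <= RInt f v M) by (apply RInt_ge_0; auto; intros; apply Hf; lra).
  unfold plus; simpl. lra.
Qed.

Definition indicator_Ico (a c t : R) : R :=
  if Rle_dec a t then if Rlt_dec t c then 1 else 0 else 0.

Lemma indicator_Ico_bounds a c t : 0 <= indicator_Ico a c t <= 1.
Proof. unfold indicator_Ico; destruct (Rle_dec a t); [destruct (Rlt_dec t c)|]; lra. Qed.

Lemma indicator_Ico_out a c t : t < a \/ c <= t -> indicator_Ico a c t = 0.
Proof. unfold indicator_Ico; destruct (Rle_dec a t); [destruct (Rlt_dec t c)|]; lra. Qed.

Lemma indicator_Ico_in a c t : a <= t < c -> indicator_Ico a c t = 1.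
Proof. unfold indicator_Ico; destruct (Rle_dec a t); [destruct (Rlt_dec t c)|]; lra. Qed.

Lemma ex_RInt_indicator_Ico a c u v : u <= v -> ex_RInt (indicator_Ico a c) u v.
Proof.
  intros Huv. apply (ex_RInt_piecewise_constant (a :: c :: nil)); [lra|].
  intros y z _ Hyz _ HL.
  assert (Ha := HL a (or_introl eq_refl)). assert (Hc := HL c (or_intror (or_introl eq_refl))).
  unfold indicator_Ico.
  destruct (Rle_dec a y), (Rle_dec a z), (Rlt_dec y c), (Rlt_dec z c); auto;
    exfalso; first [apply Ha | apply Hc]; lra.
Qed.

Lemma RInt_indicator_Ico_le a c u v : u <= v -> a <= c -> RInt (indicator_Ico a c) u v <= c - a.
Proof.
  intros Huv Hac. set (m := Rmin u a). set (M := Rmax v c).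
  assert (Hm : m <= u /\ m <= a) by (unfold m; split; [apply Rmin_l | apply Rmin_r]).
  assert (HM : v <= M /\ c <= M) by (unfold M; split; [apply Rmax_l | apply Rmax_r]).
  assert (Hint : forall y z, y <= z -> ex_RInt (indicator_Ico a c) y z) by (intros; apply ex_RInt_indicator_Ico; auto).
  apply Rle_trans with (RInt (indicator_Ico a c) m M).
  { apply RInt_le_superinterval; try lra; [apply Hint; lra | intros t _; apply indicator_Ico_bounds]. }
  rewrite <- (RInt_Chasles _ m c M), <- (RInt_Chasles _ m a c) by (apply Hint; lra).
  rewrite (RInt_ext _ (fun _ => 0) m a), (RInt_ext _ (fun _ => 0) c M), !RInt_const
    by (rewrite Rmin_left, Rmax_right by lra; intros t Ht; apply indicator_Ico_out; lra).
  assert (Hmid : RInt (indicator_Ico a c) a c <= RInt (fun _ => 1) a c).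
  { apply RInt_le; [lra | apply Hint; lra | apply ex_RInt_const | intros; apply indicator_Ico_bounds]. }
  rewrite RInt_const in Hmid. unfold plus, scal in *; simpl in *. unfold mult in *; simpl in *. lra.
Qed.

Lemma term_eq k (i j : term k) : proj1_sig i = proj1_sig j -> i = j.
Proof. destruct i, j; simpl; intros; subst; f_equal; apply proof_irrelevance. Qed.

Lemma newedge_finite k : exists lN : list (newedge k), forall f, In f lN.
Proof.
  exists (flat_map (fun ij => match excluded_middle_informative
                                ((fst ij < k)%nat /\ (snd ij < k)%nat /\ fst ij <> snd ij) with
                             | left H => exist _ ij H :: nil
                             | right _ => nil end) (list_prod (seq 0 k) (seq 0 k))).
  intros [[i j] H]. apply in_flat_map. exists (i, j). split.
  - apply in_prod; apply in_seq; simpl in H; lia.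
  - destruct excluded_middle_informative; [left; f_equal; apply proof_irrelevance | contradiction].
Qed.

Section AuxiliaryGraph.

Context {V E : Type} (tail head : E -> V) (k : nat) (s : nat -> V) (x : E -> R).

Local Notation tlp := (tailp tail k).
Local Notation hdp := (headp head k s).
Local Notation xp := (xplus k x).

Lemma Gplus_paths_finite :
  (exists lV : list V, forall v, In v lV) -> (exists lE : list E, forall e, In e lE) ->
  exists C : list (list (Defs.Eplus E k)), forall a b p, is_path tlp hdp a b p -> In p C.
Proof.
  intros [lV HV] [lE HE]. destruct (newedge_finite k) as [lN HN].
  exists (lists_upto (map inl lE ++ map inr lN) (length lV)).
  intros a b p Hp. apply in_lists_upto.
  - intros [e|ij] _; apply in_or_app; [left | right]; apply in_map; auto.
  - rewrite <- (length_map (@inl V (term k)) lV).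
    apply (path_length_le (tl := tlp) (hd := hdp) _ a b); [intros [e|ij]; simpl; apply in_map; auto | exact Hp].
Qed.

Lemma path_from_terminal_reroute (i0 : term k) u p :
  is_path tlp hdp (inr i0) (inl u) p ->
  exists j, (j < k)%nat /\
    forall i : term k, proj1_sig i <> j ->
      exists p', is_path tlp hdp (inr i) (inl u) p' /\ plen xp p' = plen xp p.
Proof.
  intros [Hw Hnd]. destruct p as [|[e|[[i1 j] [Hi1 [Hj Hij]]]] p]; simpl in Hw.
  - discriminate.
  - destruct Hw as [Htl _]. discriminate.
  - destruct Hw as [_ Hw]. exists j. split; [auto|].
    intros [i Hi] Hne. simpl in Hne.
    exists (inr (exist _ (i, j) (conj Hi (conj Hj Hne))) :: p). split; [split|reflexivity].
    + simpl. split; [f_equal; apply term_eq; reflexivity | exact Hw].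
    + inversion Hnd as [|? ? _ Hnd']. constructor; [|exact Hnd'].
      intros [Hq|Hin]; [discriminate|].
      apply in_map_iff in Hin. destruct Hin as [[f|f] [Hf _]]; discriminate.
Qed.

Variable C : list (list (Defs.Eplus E k)).
Hypothesis C_paths : forall a b p, is_path tlp hdp a b p -> In p C.

Lemma terminal_dists_two_values u :
  exists a b, forall i m, is_dist tlp hdp xp (inr i) (inl u) m -> m = a \/ m = b.
Proof.
  pose (from_terminal p := exists i, is_path tlp hdp (inr i) (inl u) p).
  destruct (classic (exists p, In p C /\ from_terminal p)) as [Hex|Hno].
  - destruct (list_argmin C from_terminal (plen xp) Hex) as (p0 & _ & [i0 Hp0] & Hmin).
    destruct (path_from_terminal_reroute i0 u p0 Hp0) as (j & Hj & Hreroute).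
    destruct (is_dist_at_most_one (tl := tlp) (hd := hdp) xp (inr (exist _ j Hj)) (inl u)) as [b Hb].
    exists (plen xp p0), b. intros i m Hm.
    destruct (Nat.eq_dec (proj1_sig i) j) as [Hij|Hij].
    + right. apply Hb. replace (exist _ j Hj) with i by (apply term_eq; auto). exact Hm.
    + left. destruct (Hreroute i Hij) as (p' & Hp' & Hlen).
      destruct Hm as [[q [Hq <-]] Hm].
      pose proof (Hm p' Hp'). pose proof (Hmin q (C_paths _ _ _ Hq) (ex_intro _ i Hq)). lra.
  - exists 0, 0. intros i m [[q [Hq _]] _]. exfalso. apply Hno. exists q. split; [eauto | exists i; auto].
Qed.

Hypothesis x_ge0 : forall e, 0 <= x e.

Lemma in_cut_between_lengths e y z :
  y <= z -> (forall p, In p C -> ~ (y <= plen xp p <= z)) ->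
  (in_cut tail head k s x y e <-> in_cut tail head k s x z e).
Proof.
  intros Hyz HC. unfold in_cut, ballp.
  split; intros [i [Htl Hhd]]; exists i;
    rewrite !(in_ball_between_lengths xp C C_paths _ _ y z Hyz HC) in *; auto.
Qed.

Lemma ex_RInt_cut_ind e : ex_RInt (cut_ind tail head k s x e) 0 1.
Proof.
  apply (ex_RInt_piecewise_constant (map (plen xp) C)); [lra|].
  intros y z _ Hyz _ HL.
  assert (HC : forall p, In p C -> ~ (y <= plen xp p <= z)) by (intros p Hp; apply HL, in_map, Hp).
  pose proof (in_cut_between_lengths e y z Hyz HC).
  unfold cut_ind.
  destruct (excluded_middle_informative (in_cut tail head k s x y e)),
           (excluded_middle_informative (in_cut tail head k s x z e)); tauto || reflexivity.
Qed.

Lemma cut_ind_le_two_indicators e :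
  exists a b, forall t,
    cut_ind tail head k s x e t <= indicator_Ico a (a + x e) t + indicator_Ico b (b + x e) t.
Proof.
  destruct (terminal_dists_two_values (tail e)) as (a & b & Hab).
  exists a, b. intros t.
  pose proof (indicator_Ico_bounds a (a + x e) t). pose proof (indicator_Ico_bounds b (b + x e) t).
  unfold cut_ind. destruct (excluded_middle_informative (in_cut tail head k s x t e))
    as [[i [[m [Hm Hmt]] Hhd]]|]; [|lra].
  destruct (is_dist_edge_le xp C C_paths (fun f => match f with inl e => x_ge0 e | inr _ => Rle_refl 0 end)
              (inr i) (inl e) m Hm) as (m' & Hm' & Hle).
  assert (Ht : t < m + x e).
  { destruct (Rlt_dec t (m + x e)) as [|Hge]; [auto|]. exfalso. apply Hhd. exists m'. simpl in Hle. split; [auto | lra]. }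
  destruct (Hab i m Hm) as [<-|<-]; rewrite (indicator_Ico_in m (m + x e) t) by lra; lra.
Qed.

End AuxiliaryGraph.

Theorem mainTheorem3
  (V E : Type) (tail head : E -> V)
  (finV : exists lV : list V, forall v, In v lV)
  (finE : exists lE : list E, forall e, In e lE)
  (k : nat) (hk : (2 <= k)%nat) (s : nat -> V)
  (s_distinct : forall i j, (i < k)%nat -> (j < k)%nat -> s i = s j -> i = j)
  (x : E -> R) (hx : feasible tail head k s x) :
  forall e : E,
    exists pr : Riemann_integrable (cut_ind tail head k s x e) 0 1,
      RiemannInt pr <= 2 * x e.
Proof.
  intros e. destruct hx as [x_ge0 _].
  destruct (Gplus_paths_finite tail head k s finV finE) as [C C_paths].
  pose proof (ex_RInt_cut_ind tail head k s x C C_paths e) as Hint.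
  exists (ex_RInt_Reals_0 _ _ _ Hint). rewrite <- RInt_Reals.
  destruct (cut_ind_le_two_indicators tail head k s x C C_paths x_ge0 e) as (a & b & Hle).
  assert (Iint : forall c, ex_RInt (indicator_Ico c (c + x e)) 0 1)
    by (intros; apply ex_RInt_indicator_Ico; lra).
  assert (Ibound : forall c, RInt (indicator_Ico c (c + x e)) 0 1 <= x e).
  { intros c. apply Rle_trans with (c + x e - c); [apply RInt_indicator_Ico_le | ]; specialize (x_ge0 e); lra. }
  apply Rle_trans with (RInt (fun t => indicator_Ico a (a + x e) t + indicator_Ico b (b + x e) t) 0 1).
  { apply RInt_le; [lra | exact Hint | apply (ex_RInt_plus (V := R_NormedModule)); auto | intros; apply Hle]. }
  rewrite (RInt_plus (V := R_CompleteNormedModule)) by auto.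
  pose proof (Ibound a). pose proof (Ibound b). unfold plus; simpl. lra.
Qed.
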